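(* Let $(M,\mathrm{d})$ be a metric space, $\mathcal X$ a set, $\tau>0$, $\mathcal S\subseteq M^{\mathcal X}$ and $f\in M^{\mathcal X}\setminus\mathcal S$. Let $\mathcal A$ be a deterministic algorithm that solves $\mathtt{Dec}(\mathcal S,f)$ from $q$ many $\tau$-accurate evaluation queries. Then for any probability measure $\mu$ over $\mathcal S$, $$q\ge\left(\max_{x\in\mathcal X}\Pr_{s\sim\mu}[\mathrm{d}(s(x),f(x))>\tau]\right)^{-1}.$$
   Context: For $s\in M^{\mathcal X}$, the evaluation oracle $\mathrm{Eval}_\tau(s)$, queried with $x\in\mathcal X$, returns some $v\in M$ with $\mathrm{d}(v,s(x))\le\tau$ (any such value may be returned); this is a $\tau$-accurate evaluation query. The decision problem $\mathtt{Dec}(\mathcal S,f)$: given evaluation-oracle access to an unknown $s\in\mathcal S\cup\{f\}$, decide whether $s\in\mathcal S$ or $s=f$. Solving it means being correct for every such $s$ and every valid oracle behaviour. *)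

From HB Require Import structures.
From mathcomp Require Import all_boot all_order all_algebra.
From mathcomp Require Import all_classical all_reals all_analysis.
Set Implicit Arguments. Unset Strict Implicit. Unset Printing Implicit Defensive.
Import Order.TTheory GRing.Theory Num.Theory.
Local Open Scope ring_scope.
Local Open Scope classical_set_scope.

Definition is_metric (R : realType) (M : Type) (dist : M -> M -> R) : Prop :=
  [/\ forall x y, 0 <= dist x y,
      forall x y, dist x y = 0 <-> x = y,
      forall x y, dist x y = dist y x &
      forall x y z, dist x z <= dist x y + dist y z].

(* A deterministic (adaptive) algorithm making evaluation queries:
   given the list of answers received so far, it chooses the next query
   point; after its queries it outputs a boolean from the full answer list
   (true = "s is in S", false = "s = f"). *)
Record det_alg (X M : Type) := DetAlg {
  next_query : seq M -> X ;
  output : seq M -> bool }.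

(* The answer list [a] (of length q) is a valid transcript of tau-accurate
   evaluation oracle answers for the function s when the algorithm A runs:
   the i-th answer is within tau of s evaluated at the i-th query, where the
   i-th query is determined by the first i answers. *)
Definition valid_transcript (R : realType) (X M : Type) (dist : M -> M -> R)
    (tau : R) (A : det_alg X M) (s : X -> M) (q : nat) (a : seq M) : Prop :=
  size a = q /\
  forall i, (i < q)%N ->
    forall v0 : M, dist (nth v0 a i) (s (next_query A (take i a))) <= tau.

Definition solves_Dec (R : realType) (X M : Type) (dist : M -> M -> R)
    (tau : R) (S : set (X -> M)) (f : X -> M) (A : det_alg X M) (q : nat) : Prop :=
  forall s : X -> M, (S s \/ s = f) ->
    forall a : seq M, valid_transcript dist tau A s q a ->
      (S s -> output A a = true) /\ (s = f -> output A a = false).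

From HB Require Import structures.
From mathcomp Require Import all_boot all_order all_algebra.
From mathcomp Require Import all_classical all_reals all_analysis.
Import Order.TTheory GRing.Theory Num.Theory.
Local Open Scope ring_scope.
Local Open Scope classical_set_scope.

(* Run the algorithm against the exact oracle of f and let x_0, ..., x_(q-1)
   be its queries. If some s in S were within tau of f at every x_i, the
   exact answers of f would also be a valid transcript for s, and the
   algorithm would have to answer both "s in S" and "s = f" on it. So every
   s in S is tau-far from f at one of the q points x_i, and the union bound
   gives 1 <= q * max_x Pr[d(s(x), f(x)) > tau]. *)

Section ExactTranscript.
Context {X M : Type} (A : det_alg X M).

Fixpoint exact_transcript (g : X -> M) (n : nat) : seq M :=
  if n is n'.+1 then
    rcons (exact_transcript g n') (g (next_query A (exact_transcript g n')))
  else [::].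

Definition exact_query (g : X -> M) (i : nat) : X :=
  next_query A (exact_transcript g i).

Lemma size_exact_transcript g n : size (exact_transcript g n) = n.
Proof. by elim: n => //= n IHn; rewrite size_rcons IHn. Qed.

Lemma take_exact_transcript g n i : (i <= n)%N ->
  take i (exact_transcript g n) = exact_transcript g i.
Proof.
elim: n => [|n IHn]; first by rewrite leqn0 => /eqP ->.
rewrite leq_eqVlt => /orP[/eqP ->|].
  by rewrite take_oversize // size_exact_transcript.
rewrite ltnS => le_in /=.
by rewrite -cats1 takel_cat ?IHn // size_exact_transcript.
Qed.

Lemma nth_exact_transcript g n i v0 : (i < n)%N ->
  nth v0 (exact_transcript g n) i = g (exact_query g i).
Proof.
elim: n => // n IHn lt_in /=.
rewrite nth_rcons size_exact_transcript.
case: ltngtP => [lt_in'|lt_ni|-> //]; first exact: IHn.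
by move: lt_in; rewrite ltnS leqNgt lt_ni.
Qed.

Lemma valid_exact_transcript {R : realType} {dist : M -> M -> R} {tau : R}
    {g s : X -> M} {n : nat} :
  (forall i, (i < n)%N -> dist (g (exact_query g i)) (s (exact_query g i)) <= tau) ->
  valid_transcript dist tau A s n (exact_transcript g n).
Proof.
move=> close; split=> [|i lt_in v0]; first exact: size_exact_transcript.
rewrite nth_exact_transcript ?take_exact_transcript ?(ltnW lt_in) //.
exact: close.
Qed.

End ExactTranscript.

Lemma solves_Dec_far_query (R : realType) (X M : Type) (dist : M -> M -> R)
    (tau : R) (S : set (X -> M)) (f : X -> M) (A : det_alg X M) (q : nat)
    (s : X -> M) :
  is_metric dist -> 0 <= tau -> solves_Dec dist tau S f A q -> S s ->
  exists2 i, (i < q)%N &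
    tau < dist (s (exact_query A f i)) (f (exact_query A f i)).
Proof.
case=> _ dist0 distC _ tau_ge0 solvesA Ss; apply: contrapT => no_far.
have close_s i : (i < q)%N ->
    dist (f (exact_query A f i)) (s (exact_query A f i)) <= tau.
  move=> lt_iq; rewrite distC leNgt; apply/negP => far.
  by apply: no_far; exists i.
have close_f i : (i < q)%N ->
    dist (f (exact_query A f i)) (f (exact_query A f i)) <= tau.
  by move=> _; rewrite (proj2 (dist0 _ _)).
have out_true := (solvesA s (or_introl Ss) _ (valid_exact_transcript A close_s)).1 Ss.
by rewrite (solvesA f (or_intror erefl) _ (valid_exact_transcript A close_f)).2 in out_true.
Qed.

Lemma probability_finite_cover_le (R : realType) (d : measure_display)
    (T : measurableType d) (P : probability T R) (E : (set T) ^nat) (n : nat)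
    (p : \bar R) :
  (forall i, (i < n)%N -> measurable (E i)) ->
  (forall i, (i < n)%N -> (P (E i) <= p)%E) ->
  (forall w, exists2 i, (i < n)%N & E i w) ->
  (1 <= n%:R%:E * p)%E.
Proof.
move=> mE PE_le cover; rewrite -(probability_setT P).
have -> : [set: T] = \big[setU/set0]_(i < n) E i.
  by apply/seteqP; split=> // w _; rewrite -bigcup_mkord; apply: cover.
apply: le_trans (Boole_inequality P mE) _.
apply: (@le_trans _ _ (\sum_(i < n) p)%E).
  by apply: lee_sum => i _; apply: PE_le.
by rewrite sumr_const card_ord mule_natl.
Qed.

Theorem mainTheorem3 (R : realType) (M X : Type) (dist : M -> M -> R)
  (hdist : is_metric dist) (tau : R) (htau : 0 < tau)
  (S : set (X -> M)) (f : X -> M) (hf : ~ S f)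
  (A : det_alg X M) (q : nat) (hA : solves_Dec dist tau S f A q)
  (d : measure_display) (Omega : measurableType d) (mu : probability Omega R)
  (smp : Omega -> (X -> M)) (hsmp : forall w, S (smp w))
  (hmeas : forall x : X, measurable [set w | tau < dist (smp w x) (f x)]) :
  (1 <= (q%:R)%:E *
        ereal_sup (range (fun x : X => mu [set w | (tau < dist (smp w x) (f x))%R])))%E.
Proof.
pose far i := [set w | tau < dist (smp w (exact_query A f i)) (f (exact_query A f i))].
apply: (@probability_finite_cover_le _ _ _ mu far).
- by move=> i _; apply: hmeas.
- by move=> i _; apply: ereal_sup_ubound; exists (exact_query A f i).
- by move=> w; apply: solves_Dec_far_query hdist (ltW htau) hA (hsmp w).
Qed.
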